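(* Let $(\mathcal C,\otimes,I)$ be a monoidal category and $M$ a strong monad on $\mathcal C$ such that for every object $A$ the algebraically free monad of the strong endofunctor $X\mapsto A\otimes MX$ exists and is strongly generated, so that the forgetful functor $U:\mathbf{EMMon}_M\to\mathcal C$ has a left adjoint $F$. Then the adjunction $F\dashv U$ is strictly monadic; consequently $\mathbf{EMMon}_M$ is isomorphic to the category of Eilenberg--Moore algebras of the monad $UF$.
   Context: A strong monad $M$ has a strength $\tau_{A,B}: MA\otimes B\to M(A\otimes B)$ satisfying the usual coherence laws. An Eilenberg--Moore $M$-monoid is $\langle A,a: MA\to A,m: A\otimes A\to A,u: I\to A\rangle$ where $\langle A,a\rangle$ is an Eilenberg--Moore $M$-algebra, $\langle A,m,u\rangle$ is a monoid, and $m\circ(a\otimes\mathrm{id}_A)=a\circ Mm\circ\tau_{A,A}$; morphisms are $\mathcal C$-morphisms that are both algebra and monoid morphisms, forming $\mathbf{EMMon}_M$, with $U$ the carrier functor. The strong endofunctor $X\mapsto A\otimes MX$ has strength $(A\otimes MX)\otimes Y\cong A\otimes(MX\otimes Y)\xrightarrow{\mathrm{id}\otimes\tau}A\otimes M(X\otimes Y)$. For a strong endofunctor $G$, the algebraically free monad $G^*$ exists if free $G$-algebras $\langle G^*X,\mathsf{cons}\rangle$ (unit $\eta^{\mathcal F}$) exist; it is strongly generated if for every $f: X\otimes Y\to C$ and $G$-algebra $\langle C,c\rangle$ there is a unique $\widehat f: G^*X\otimes Y\to C$ with $\widehat f\circ(\eta^{\mathcal F}\otimes\mathrm{id})=f$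 and $\widehat f\circ(\mathsf{cons}\otimes\mathrm{id})=c\circ G\widehat f\circ\tau^G$. An adjunction $L\dashv R:\mathcal D\to\mathcal C$ is strictly monadic if the comparison functor from $\mathcal D$ to the Eilenberg--Moore category of the induced monad $RL$, $X\mapsto\langle RX, R\epsilon_X\rangle$, is an isomorphism of categories. *)

From Stdlib Require Import ProofIrrelevance.

Record Category := {
  Ob :> Type;
  Hom : Ob -> Ob -> Type;
  idm : forall A : Ob, Hom A A;
  comp : forall A B D : Ob, Hom B D -> Hom A B -> Hom A D;
  comp_idl : forall A B (f : Hom A B), comp A B B (idm B) f = f;
  comp_idr : forall A B (f : Hom A B), comp A A B f (idm A) = f;
  comp_assoc : forall A B D E (h : Hom D E) (g : Hom B D) (f : Hom A B),
      comp A D E h (comp A B D g f) = comp A B E (comp B D E h g) f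
}.
Arguments Hom {_} _ _.
Arguments idm {_} _.
Arguments comp {_ _ _ _} _ _.
Arguments comp_idl {_ _ _} _.
Arguments comp_idr {_ _ _} _.
Arguments comp_assoc {_ _ _ _ _} _ _ _.

Notation "g ∘ f" := (comp g f) (at level 40, left associativity).

Record Functor (C D : Category) := {
  fob :> C -> D;
  fmor : forall A B : C, Hom A B -> Hom (fob A) (fob B);
  fmor_id : forall A : C, fmor A A (idm A) = idm (fob A);
  fmor_comp : forall (A B E : C) (g : Hom B E) (f : Hom A B),
      fmor A E (g ∘ f) = fmor B E g ∘ fmor A B f
}.
Arguments fob {_ _} _ _.
Arguments fmor {_ _} _ {_ _} _.

Definition bijective {X Y : Type} (f : X -> Y) : Prop :=
  (forall x y, f x = f y -> x = y) /\ (forall y, exists x, f x = y).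

(* A functor is an isomorphism of categories iff it is bijective on objects
   and on every hom-set (equivalently: it has a two-sided inverse functor). *)
Definition IsoOfCategories {C D : Category} (K : Functor C D) : Prop :=
  bijective (fob K) /\ forall A B : C, bijective (@fmor C D K A B).

Lemma sig_ext {T : Type} {P : T -> Prop} (x y : sig P) :
  proj1_sig x = proj1_sig y -> x = y.
Proof.
  destruct x as [x px], y as [y py]; simpl; intros ->; f_equal;
  apply proof_irrelevance.
Qed.

Record MonoidalData (C : Category) := {
  tens : C -> C -> C;
  tensm : forall A B A' B' : C, Hom A A' -> Hom B B' -> Hom (tens A B) (tens A' B');
  unitI : C;
  assoc : forall A B D : C, Hom (tens (tens A B) D) (tens A (tens B D));
  assoc_inv : forall A B D : C, Hom (tens A (tens B D)) (tens (tens A B) D);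
  lunit : forall A : C, Hom (tens unitI A) A;
  lunit_inv : forall A : C, Hom A (tens unitI A);
  runit : forall A : C, Hom (tens A unitI) A;
  runit_inv : forall A : C, Hom A (tens A unitI)
}.
Arguments tens {_} _ _ _.
Arguments tensm {_} _ {_ _ _ _} _ _.
Arguments unitI {_} _.
Arguments assoc {_} _ _ _ _.
Arguments assoc_inv {_} _ _ _ _.
Arguments lunit {_} _ _.
Arguments lunit_inv {_} _ _.
Arguments runit {_} _ _.
Arguments runit_inv {_} _ _.

Record IsMonoidal {C : Category} (m : MonoidalData C) : Prop := {
  tensm_id : forall A B : C, tensm m (idm A) (idm B) = idm (tens m A B);
  tensm_comp : forall (A B E A' B' E' : C) (f : Hom A B) (g : Hom B E)
      (f' : Hom A' B') (g' : Hom B' E'),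
      tensm m (g ∘ f) (g' ∘ f') = tensm m g g' ∘ tensm m f f';
  assoc_iso1 : forall A B D : C, assoc m A B D ∘ assoc_inv m A B D = idm _;
  assoc_iso2 : forall A B D : C, assoc_inv m A B D ∘ assoc m A B D = idm _;
  assoc_nat : forall (A B D A' B' D' : C) (f : Hom A A') (g : Hom B B') (h : Hom D D'),
      assoc m A' B' D' ∘ tensm m (tensm m f g) h = tensm m f (tensm m g h) ∘ assoc m A B D;
  lunit_iso1 : forall A : C, lunit m A ∘ lunit_inv m A = idm _;
  lunit_iso2 : forall A : C, lunit_inv m A ∘ lunit m A = idm _;
  lunit_nat : forall (A B : C) (f : Hom A B),
      lunit m B ∘ tensm m (idm (unitI m)) f = f ∘ lunit m A;
  runit_iso1 : forall A : C, runit m A ∘ runit_inv m A = idm _;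
  runit_iso2 : forall A : C, runit_inv m A ∘ runit m A = idm _;
  runit_nat : forall (A B : C) (f : Hom A B),
      runit m B ∘ tensm m f (idm (unitI m)) = f ∘ runit m A;
  pentagon : forall A B D E : C,
      assoc m A B (tens m D E) ∘ assoc m (tens m A B) D E
      = tensm m (idm A) (assoc m B D E) ∘ assoc m A (tens m B D) E
        ∘ tensm m (assoc m A B D) (idm E);
  triangle : forall A B : C,
      tensm m (idm A) (lunit m B) ∘ assoc m A (unitI m) B
      = tensm m (runit m A) (idm B)
}.

Record StrongMonadData {C : Category} (m : MonoidalData C) := {
  Mo : C -> C;
  Mm : forall A B : C, Hom A B -> Hom (Mo A) (Mo B);
  ret : forall A : C, Hom A (Mo A);
  join : forall A : C, Hom (Mo (Mo A)) (Mo A);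
  strength : forall A B : C, Hom (tens m (Mo A) B) (Mo (tens m A B))
}.
Arguments Mo {_ _} _ _.
Arguments Mm {_ _} _ {_ _} _.
Arguments ret {_ _} _ _.
Arguments join {_ _} _ _.
Arguments strength {_ _} _ _ _.

Record IsStrongMonad {C : Category} {m : MonoidalData C} (M : StrongMonadData m) : Prop := {
  Mm_id : forall A : C, Mm M (idm A) = idm (Mo M A);
  Mm_comp : forall (A B E : C) (f : Hom A B) (g : Hom B E), Mm M (g ∘ f) = Mm M g ∘ Mm M f;
  ret_nat : forall (A B : C) (f : Hom A B), Mm M f ∘ ret M A = ret M B ∘ f;
  join_nat : forall (A B : C) (f : Hom A B), Mm M f ∘ join M A = join M B ∘ Mm M (Mm M f);
  join_ret_l : forall A : C, join M A ∘ ret M (Mo M A) = idm _;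
  join_ret_r : forall A : C, join M A ∘ Mm M (ret M A) = idm _;
  join_assoc : forall A : C, join M A ∘ join M (Mo M A) = join M A ∘ Mm M (join M A);
  strength_nat : forall (A B A' B' : C) (f : Hom A A') (g : Hom B B'),
      Mm M (tensm m f g) ∘ strength M A B = strength M A' B' ∘ tensm m (Mm M f) g;
  strength_unit : forall A : C,
      Mm M (runit m A) ∘ strength M A (unitI m) = runit m (Mo M A);
  strength_assoc : forall A B D : C,
      Mm M (assoc m A B D) ∘ strength M (tens m A B) D ∘ tensm m (strength M A B) (idm D)
      = strength M A (tens m B D) ∘ assoc m (Mo M A) B D;
  strength_ret : forall A B : C,
      strength M A B ∘ tensm m (ret M A) (idm B) = ret M (tens m A B);
  strength_join : forall A B : C,
      strength M A B ∘ tensm m (join M A) (idm B)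
      = join M (tens m A B) ∘ Mm M (strength M A B) ∘ strength M (Mo M A) B
}.

Section Endo.
Context {C : Category} {m : MonoidalData C} (M : StrongMonadData m).

Definition GA (A X : C) : C := tens m A (Mo M X).
Definition GAm (A : C) {X Y : C} (f : Hom X Y) : Hom (GA A X) (GA A Y) :=
  tensm m (idm A) (Mm M f).
Definition GAstr (A X Y : C) : Hom (tens m (GA A X) Y) (GA A (tens m X Y)) :=
  tensm m (idm A) (strength M X Y) ∘ assoc m A (Mo M X) Y.

Definition IsFreeGAAlgebra (A X T : C) (cons : Hom (GA A T) T) (etaF : Hom X T) : Prop :=
  forall (D : C) (c : Hom (GA A D) D) (f : Hom X D),
    exists! h : Hom T D, h ∘ etaF = f /\ h ∘ cons = c ∘ GAm A h.

Definition IsStronglyGenerated (A X T : C) (cons : Hom (GA A T) T) (etaF : Hom X T) : Prop :=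
  forall (Y D : C) (c : Hom (GA A D) D) (f : Hom (tens m X Y) D),
    exists! h : Hom (tens m T Y) D,
      h ∘ tensm m etaF (idm Y) = f /\
      h ∘ tensm m cons (idm Y) = c ∘ GAm A h ∘ GAstr A T Y.

Definition AlgFreeMonadStronglyGenerated (A : C) : Prop :=
  forall X : C, exists (T : C) (cons : Hom (GA A T) T) (etaF : Hom X T),
    IsFreeGAAlgebra A X T cons etaF /\ IsStronglyGenerated A X T cons etaF.

End Endo.

Section EMMon.
Context {C : Category} {m : MonoidalData C} (M : StrongMonadData m).

Record EMMonoid := {
  emcar : C;
  emact : Hom (Mo M emcar) emcar;
  emmul : Hom (tens m emcar emcar) emcar;
  emunit : Hom (unitI m) emcar;
  em_alg_unit : emact ∘ ret M emcar = idm emcar;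
  em_alg_mult : emact ∘ Mm M emact = emact ∘ join M emcar;
  em_mon_assoc : emmul ∘ tensm m emmul (idm emcar)
                 = emmul ∘ tensm m (idm emcar) emmul ∘ assoc m emcar emcar emcar;
  em_mon_lunit : emmul ∘ tensm m emunit (idm emcar) = lunit m emcar;
  em_mon_runit : emmul ∘ tensm m (idm emcar) emunit = runit m emcar;
  em_compat : emmul ∘ tensm m emact (idm emcar)
              = emact ∘ Mm M emmul ∘ strength M emcar emcar
}.

Definition is_EMhom (A B : EMMonoid) (f : Hom (emcar A) (emcar B)) : Prop :=
  f ∘ emact A = emact B ∘ Mm M f /\
  f ∘ emmul A = emmul B ∘ tensm m f f /\
  f ∘ emunit A = emunit B.

Definition EMHom (A B : EMMonoid) : Type := { f : Hom (emcar A) (emcar B) | is_EMhom A B f }.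

Context (Hm : IsMonoidal m) (HM : IsStrongMonad M).

Lemma is_EMhom_id (A : EMMonoid) : is_EMhom A A (idm (emcar A)).
Proof.
  unfold is_EMhom; rewrite (Mm_id _ HM), (tensm_id _ Hm), !comp_idl, !comp_idr; auto.
Qed.

Lemma is_EMhom_comp (A B D : EMMonoid) (g : Hom (emcar B) (emcar D)) (f : Hom (emcar A) (emcar B)) :
  is_EMhom B D g -> is_EMhom A B f -> is_EMhom A D (g ∘ f).
Proof.
  intros [g1 [g2 g3]] [f1 [f2 f3]]; unfold is_EMhom; repeat split.
  - rewrite <- comp_assoc, f1, comp_assoc, g1, <- comp_assoc, <- (Mm_comp _ HM); reflexivity.
  - rewrite <- comp_assoc, f2, comp_assoc, g2, <- comp_assoc, <- (tensm_comp _ Hm); reflexivity.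
  - rewrite <- comp_assoc, f3, g3; reflexivity.
Qed.

Definition EMMon_cat : Category.
Proof.
  refine {| Ob := EMMonoid; Hom := EMHom;
            idm := fun A => exist _ (idm (emcar A)) (is_EMhom_id A);
            comp := fun A B D g f => exist _ (proj1_sig g ∘ proj1_sig f)
                                      (is_EMhom_comp _ _ _ _ _ (proj2_sig g) (proj2_sig f)) |}.
  - intros; apply sig_ext; apply comp_idl.
  - intros; apply sig_ext; apply comp_idr.
  - intros; apply sig_ext; apply comp_assoc.
Defined.

End EMMon.

Record LeftAdjointToU {C : Category} {m : MonoidalData C} (M : StrongMonadData m) := {
  Fob : C -> EMMonoid M;
  unitF : forall X : C, Hom X (emcar M (Fob X));
  ext : forall (X : C) (B : EMMonoid M), Hom X (emcar M B) -> EMHom M (Fob X) B;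
  ext_comm : forall (X : C) (B : EMMonoid M) (f : Hom X (emcar M B)),
      proj1_sig (ext X B f) ∘ unitF X = f;
  ext_uniq : forall (X : C) (B : EMMonoid M) (f : Hom X (emcar M B)) (g : EMHom M (Fob X) B),
      proj1_sig g ∘ unitF X = f -> g = ext X B f
}.
Arguments Fob {_ _ _} _ _.
Arguments unitF {_ _ _} _ _.
Arguments ext {_ _ _} _ {_ _} _.

(* Eilenberg--Moore category of a monad (given by its data + functor   *)
(* laws, which are all that is needed to form the category).           *)

Section EMcat.
Context {C : Category} (Tob : C -> C) (Tmap : forall A B : C, Hom A B -> Hom (Tob A) (Tob B))
        (Tunit : forall A : C, Hom A (Tob A)) (Tmult : forall A : C, Hom (Tob (Tob A)) (Tob A))
        (Tmap_id : forall A : C, Tmap A A (idm A) = idm (Tob A))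
        (Tmap_comp : forall (A B E : C) (f : Hom A B) (g : Hom B E),
            Tmap A E (g ∘ f) = Tmap B E g ∘ Tmap A B f).

Definition EMAlg : Type :=
  { X : C & { x : Hom (Tob X) X | x ∘ Tunit X = idm X /\ x ∘ Tmap _ _ x = x ∘ Tmult X } }.
Definition alg_car (a : EMAlg) : C := projT1 a.
Definition alg_str (a : EMAlg) : Hom (Tob (alg_car a)) (alg_car a) := proj1_sig (projT2 a).

Definition EMAlgHom (a b : EMAlg) : Type :=
  { h : Hom (alg_car a) (alg_car b) | h ∘ alg_str a = alg_str b ∘ Tmap _ _ h }.

Lemma EMAlgHom_id (a : EMAlg) : idm (alg_car a) ∘ alg_str a = alg_str a ∘ Tmap _ _ (idm (alg_car a)).
Proof. rewrite Tmap_id, comp_idl, comp_idr; reflexivity. Qed.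

Lemma EMAlgHom_comp (a b c : EMAlg) (g : EMAlgHom b c) (f : EMAlgHom a b) :
  (proj1_sig g ∘ proj1_sig f) ∘ alg_str a = alg_str c ∘ Tmap _ _ (proj1_sig g ∘ proj1_sig f).
Proof.
  destruct g as [g Hg], f as [f Hf]; simpl.
  rewrite <- comp_assoc, Hf, comp_assoc, Hg, <- comp_assoc, <- Tmap_comp; reflexivity.
Qed.

Definition EM_cat : Category.
Proof.
  refine {| Ob := EMAlg; Hom := EMAlgHom;
            idm := fun a => exist _ (idm (alg_car a)) (EMAlgHom_id a);
            comp := fun a b c g f => exist _ (proj1_sig g ∘ proj1_sig f) (EMAlgHom_comp a b c g f) |}.
  - intros; apply sig_ext; apply comp_idl.
  - intros; apply sig_ext; apply comp_idr.
  - intros; apply sig_ext; apply comp_assoc.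
Defined.

End EMcat.

Section Comparison.
Context {C : Category} {m : MonoidalData C} {M : StrongMonadData m}
        (Hm : IsMonoidal m) (HM : IsStrongMonad M) (F : LeftAdjointToU M).

Definition UFob (X : C) : C := emcar M (Fob F X).
Definition UFmap (X Y : C) (f : Hom X Y) : Hom (UFob X) (UFob Y) :=
  proj1_sig (ext F (unitF F Y ∘ f)).
Definition counit (B : EMMonoid M) : EMHom M (Fob F (emcar M B)) B := ext F (idm (emcar M B)).
Definition UFmult (X : C) : Hom (UFob (UFob X)) (UFob X) := proj1_sig (counit (Fob F X)).

Let EMC := EMMon_cat M Hm HM.

Lemma ext_uniq' (X : C) (B : EMMonoid M) (g1 g2 : EMHom M (Fob F X) B) :
  proj1_sig g1 ∘ unitF F X = proj1_sig g2 ∘ unitF F X -> proj1_sig g1 = proj1_sig g2.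
Proof.
  intro H. pose proof (ext_uniq _ F X B _ g1 H) as E1.
  pose proof (ext_uniq _ F X B _ g2 eq_refl) as E2.
  rewrite E1, <- E2; reflexivity.
Qed.

Lemma UFmap_id (X : C) : UFmap X X (idm X) = idm (UFob X).
Proof.
  unfold UFmap.
  change (idm (UFob X)) with (proj1_sig (@idm EMC (Fob F X))).
  apply ext_uniq'. rewrite ext_comm; simpl. rewrite comp_idl, comp_idr; reflexivity.
Qed.

Lemma UFmap_comp (A B E : C) (f : Hom A B) (g : Hom B E) :
  UFmap A E (g ∘ f) = UFmap B E g ∘ UFmap A B f.
Proof.
  unfold UFmap.
  change (proj1_sig (ext F (unitF F E ∘ g)) ∘ proj1_sig (ext F (unitF F B ∘ f)))
    with (proj1_sig (@comp EMC _ _ _ (ext F (unitF F E ∘ g)) (ext F (unitF F B ∘ f)))).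
  apply ext_uniq'. simpl. rewrite (ext_comm _ F A). rewrite <- (comp_assoc _ _ (unitF F A)). rewrite (ext_comm _ F A), (comp_assoc _ (unitF F B) f), (ext_comm _ F B).
  apply comp_assoc.
Qed.

Definition UF_EM_cat : Category := EM_cat UFob UFmap (unitF F) UFmult UFmap_id UFmap_comp.

Lemma counit_alg (B : EMMonoid M) :
  proj1_sig (counit B) ∘ unitF F (emcar M B) = idm (emcar M B) /\
  proj1_sig (counit B) ∘ UFmap _ _ (proj1_sig (counit B))
  = proj1_sig (counit B) ∘ UFmult (emcar M B).
Proof.
  split.
  - apply ext_comm.
  - unfold UFmap, UFmult.
    change (proj1_sig (counit B) ∘ proj1_sig (ext F (unitF F (emcar M B) ∘ proj1_sig (counit B))))
      with (proj1_sig (@comp EMC _ _ _ (counit B) (ext F (unitF F (emcar M B) ∘ proj1_sig (counit B))))).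
    change (proj1_sig (counit B) ∘ proj1_sig (counit (Fob F (emcar M B))))
      with (proj1_sig (@comp EMC _ _ _ (counit B) (counit (Fob F (emcar M B))))).
    apply ext_uniq'. simpl.
    rewrite <- !comp_assoc, ext_comm. unfold counit. rewrite ext_comm, comp_assoc, ext_comm.
    rewrite comp_idl, comp_idr; reflexivity.
Qed.

Definition comparison_ob (B : EMMonoid M) : @Ob UF_EM_cat :=
  existT _ (emcar M B) (exist _ (proj1_sig (counit B)) (counit_alg B)).

Lemma comparison_hom (B B' : EMMonoid M) (f : EMHom M B B') :
  proj1_sig f ∘ proj1_sig (counit B) = proj1_sig (counit B') ∘ UFmap _ _ (proj1_sig f).
Proof.
  unfold UFmap.
  change (proj1_sig f ∘ proj1_sig (counit B))
    with (proj1_sig (@comp EMC _ _ _ f (counit B))).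
  change (proj1_sig (counit B') ∘ proj1_sig (ext F (unitF F (emcar M B') ∘ proj1_sig f)))
    with (proj1_sig (@comp EMC _ _ _ (counit B') (ext F (unitF F (emcar M B') ∘ proj1_sig f)))).
  apply ext_uniq'. simpl.
  unfold counit. rewrite <- !comp_assoc.
  rewrite (ext_comm _ F (emcar M B) B), (ext_comm _ F (emcar M B) (Fob F (emcar M B'))), comp_idr.
  rewrite comp_assoc, (ext_comm _ F (emcar M B') B'), comp_idl; reflexivity.
Qed.

Definition comparison : Functor EMC UF_EM_cat.
Proof.
  refine {| fob := (comparison_ob : @Ob EMC -> @Ob UF_EM_cat);
            fmor := fun (B B' : EMMonoid M) (f : EMHom M B B') => exist _ (proj1_sig f) (comparison_hom B B' f) |}.
  - intros; apply sig_ext; reflexivity.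
  - intros; apply sig_ext; reflexivity.
Defined.

Definition StrictlyMonadic : Prop := IsoOfCategories comparison.

End Comparison.

(* A UF-algebra x : UFX -> X is split by the unit of the adjunction and
   coequalises the reflexive pair UF x, U eps_FX of EM-monoid morphisms.  Hence
   the operations of FX descend along x, yielding the unique EM-monoid structure
   on X for which x is a morphism, and the counit at that EM-monoid is x itself.
   Conversely every EM-monoid B is recovered from eps_B, an EM-monoid morphism
   split by the unit, so the comparison functor is injective on objects; the same
   splitting argument shows that every UF-algebra map between comparison images
   is an EM-monoid morphism. *)

From Stdlib Require Import ProofIrrelevance Eqdep.

Lemma comp_assoc_r {C : Category} {A B D E : C} (h : Hom D E) (g : Hom B D) (f : Hom A B) :
  h ∘ g ∘ f = h ∘ (g ∘ f).
Proof. symmetry; apply comp_assoc. Qed.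

Ltac reassoc := repeat rewrite comp_assoc_r.

Lemma split_epi_cancel {C : Category} {A B D : C} (e : Hom A B) (r : Hom B A) (u v : Hom B D) :
  e ∘ r = idm B -> u ∘ e = v ∘ e -> u = v.
Proof.
  intros Her Huv.
  rewrite <- (comp_idr u), <- (comp_idr v), <- Her, !comp_assoc, Huv; reflexivity.
Qed.

Section StructureTransport.
Context {C : Category} {m : MonoidalData C} {M : StrongMonadData m}
        (Hm : IsMonoidal m) (HM : IsStrongMonad M).

Lemma Mm_split {A B : C} (e : Hom A B) (r : Hom B A) :
  e ∘ r = idm B -> Mm M e ∘ Mm M r = idm (Mo M B).
Proof. intro Her; rewrite <- (Mm_comp _ HM), Her; apply (Mm_id _ HM). Qed.

Lemma tensm_split {A B A' B' : C} (e : Hom A B) (r : Hom B A) (e' : Hom A' B') (r' : Hom B' A') :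
  e ∘ r = idm B -> e' ∘ r' = idm B' -> tensm m e e' ∘ tensm m r r' = idm (tens m B B').
Proof. intros Her Her'; rewrite <- (tensm_comp _ Hm), Her, Her'; apply (tensm_id _ Hm). Qed.

Lemma tensm_comp_l {A B D A' B' : C} (f : Hom A B) (g : Hom B D) (h : Hom A' B') :
  tensm m (g ∘ f) h = tensm m g h ∘ tensm m f (idm A').
Proof. rewrite <- (tensm_comp _ Hm), comp_idr; reflexivity. Qed.

Lemma tensm_comp_r {A B A' B' D' : C} (h : Hom A B) (f : Hom A' B') (g : Hom B' D') :
  tensm m h (g ∘ f) = tensm m h g ∘ tensm m (idm A) f.
Proof. rewrite <- (tensm_comp _ Hm), comp_idr; reflexivity. Qed.

Section Quotient.
Variables (B : EMMonoid M) (X : C) (p : Hom (emcar M B) X) (s : Hom X (emcar M B)).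
Hypothesis p_s : p ∘ s = idm X.
Hypothesis p_act : p ∘ emact M B ∘ Mm M (s ∘ p) = p ∘ emact M B.
Hypothesis p_mul : p ∘ emmul M B ∘ tensm m (s ∘ p) (s ∘ p) = p ∘ emmul M B.

Definition quot_act : Hom (Mo M X) X := p ∘ emact M B ∘ Mm M s.
Definition quot_mul : Hom (tens m X X) X := p ∘ emmul M B ∘ tensm m s s.
Definition quot_unit : Hom (unitI m) X := p ∘ emunit M B.

Lemma quot_act_hom : quot_act ∘ Mm M p = p ∘ emact M B.
Proof. unfold quot_act; rewrite comp_assoc_r, <- (Mm_comp _ HM); exact p_act. Qed.

Lemma quot_mul_hom : quot_mul ∘ tensm m p p = p ∘ emmul M B.
Proof. unfold quot_mul; rewrite comp_assoc_r, <- (tensm_comp _ Hm); exact p_mul. Qed.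

Lemma quot_alg_unit : quot_act ∘ ret M X = idm X.
Proof.
  unfold quot_act; reassoc.
  rewrite (ret_nat _ HM), (comp_assoc (emact M B)), (em_alg_unit M B), comp_idl; exact p_s.
Qed.

Lemma quot_alg_mult : quot_act ∘ Mm M quot_act = quot_act ∘ join M X.
Proof.
  apply (split_epi_cancel _ _ _ _ (Mm_split _ _ (Mm_split _ _ p_s))).
  reassoc.
  rewrite <- (Mm_comp _ HM), quot_act_hom, (Mm_comp _ HM), <- (join_nat _ HM), !comp_assoc,
    quot_act_hom.
  reassoc; rewrite (em_alg_mult M B); reflexivity.
Qed.

Lemma quot_mon_assoc :
  quot_mul ∘ tensm m quot_mul (idm X) = quot_mul ∘ tensm m (idm X) quot_mul ∘ assoc m X X X.
Proof.
  apply (split_epi_cancel _ _ _ _ (tensm_split _ _ _ _ (tensm_split _ _ _ _ p_s p_s) p_s)).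
  assert (L : quot_mul ∘ tensm m quot_mul (idm X) ∘ tensm m (tensm m p p) p
              = p ∘ emmul M B ∘ tensm m (emmul M B) (idm _)).
  { rewrite comp_assoc_r, <- (tensm_comp _ Hm), comp_idl, quot_mul_hom, tensm_comp_l,
      comp_assoc, quot_mul_hom; reflexivity. }
  assert (R : quot_mul ∘ tensm m (idm X) quot_mul ∘ assoc m X X X ∘ tensm m (tensm m p p) p
              = p ∘ emmul M B ∘ tensm m (idm _) (emmul M B) ∘ assoc m _ _ _).
  { reassoc; rewrite (assoc_nat _ Hm), (comp_assoc (tensm m _ _)), <- (tensm_comp _ Hm),
      comp_idl, quot_mul_hom, tensm_comp_r, !comp_assoc, quot_mul_hom; reflexivity. }
  rewrite L, R, comp_assoc_r, (em_mon_assoc M B); reassoc; reflexivity.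
Qed.

Lemma quot_mon_lunit : quot_mul ∘ tensm m quot_unit (idm X) = lunit m X.
Proof.
  apply (split_epi_cancel _ _ _ _ (tensm_split _ _ _ _ (comp_idl (idm _)) p_s)).
  rewrite (lunit_nat _ Hm), comp_assoc_r, <- (tensm_comp _ Hm), comp_idl, comp_idr.
  unfold quot_unit; rewrite tensm_comp_l, comp_assoc, quot_mul_hom, comp_assoc_r,
    (em_mon_lunit M B); reflexivity.
Qed.

Lemma quot_mon_runit : quot_mul ∘ tensm m (idm X) quot_unit = runit m X.
Proof.
  apply (split_epi_cancel _ _ _ _ (tensm_split _ _ _ _ p_s (comp_idl (idm _)))).
  rewrite (runit_nat _ Hm), comp_assoc_r, <- (tensm_comp _ Hm), comp_idl, comp_idr.
  unfold quot_unit; rewrite tensm_comp_r, comp_assoc, quot_mul_hom, comp_assoc_r,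
    (em_mon_runit M B); reflexivity.
Qed.

Lemma quot_compat :
  quot_mul ∘ tensm m quot_act (idm X) = quot_act ∘ Mm M quot_mul ∘ strength M X X.
Proof.
  apply (split_epi_cancel _ _ _ _ (tensm_split _ _ _ _ (Mm_split _ _ p_s) p_s)).
  assert (L : quot_mul ∘ tensm m quot_act (idm X) ∘ tensm m (Mm M p) p
              = p ∘ emmul M B ∘ tensm m (emact M B) (idm _)).
  { rewrite comp_assoc_r, <- (tensm_comp _ Hm), comp_idl, quot_act_hom, tensm_comp_l,
      comp_assoc, quot_mul_hom; reflexivity. }
  rewrite L, comp_assoc_r, (em_compat M B); reassoc.
  rewrite <- (strength_nat _ HM), (comp_assoc (Mm M _)), <- (Mm_comp _ HM), quot_mul_hom,
    (Mm_comp _ HM), !comp_assoc, quot_act_hom; reflexivity.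
Qed.

Definition quot_EMMonoid : EMMonoid M :=
  {| emcar := X; emact := quot_act; emmul := quot_mul; emunit := quot_unit;
     em_alg_unit := quot_alg_unit; em_alg_mult := quot_alg_mult;
     em_mon_assoc := quot_mon_assoc; em_mon_lunit := quot_mon_lunit;
     em_mon_runit := quot_mon_runit; em_compat := quot_compat |}.

Lemma quot_EMhom : is_EMhom M B quot_EMMonoid p.
Proof.
  repeat split; cbn; symmetry; [apply quot_act_hom | apply quot_mul_hom].
Qed.
End Quotient.

Section ReflexiveCoequaliser.
Variables (B B' : EMMonoid M) (h1 h2 : EMHom M B' B) (t : Hom (emcar M B) (emcar M B'))
          (X : C) (p : Hom (emcar M B) X) (s : Hom X (emcar M B)).
Hypothesis p_h : p ∘ proj1_sig h1 = p ∘ proj1_sig h2.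
Hypothesis h1_t : proj1_sig h1 ∘ t = s ∘ p.
Hypothesis h2_t : proj1_sig h2 ∘ t = idm _.

Lemma coequaliser_act : p ∘ emact M B ∘ Mm M (s ∘ p) = p ∘ emact M B.
Proof.
  destruct (proj2_sig h1) as [k1_act _], (proj2_sig h2) as [k2_act _].
  set (k1 := proj1_sig h1) in *; set (k2 := proj1_sig h2) in *.
  rewrite <- h1_t, (Mm_comp _ HM); reassoc.
  rewrite (comp_assoc (emact M B)), <- k1_act, comp_assoc_r, (comp_assoc p), p_h; reassoc.
  rewrite (comp_assoc k2), k2_act; reassoc.
  rewrite <- (Mm_comp _ HM), h2_t, (Mm_id _ HM), comp_idr; reflexivity.
Qed.

Lemma coequaliser_mul : p ∘ emmul M B ∘ tensm m (s ∘ p) (s ∘ p) = p ∘ emmul M B.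
Proof.
  destruct (proj2_sig h1) as [_ [k1_mul _]], (proj2_sig h2) as [_ [k2_mul _]].
  set (k1 := proj1_sig h1) in *; set (k2 := proj1_sig h2) in *.
  rewrite <- h1_t, (tensm_comp _ Hm); reassoc.
  rewrite (comp_assoc (emmul M B)), <- k1_mul, comp_assoc_r, (comp_assoc p), p_h; reassoc.
  rewrite (comp_assoc k2), k2_mul; reassoc.
  rewrite <- (tensm_comp _ Hm), h2_t, (tensm_id _ Hm), comp_idr; reflexivity.
Qed.
End ReflexiveCoequaliser.

Lemma emact_split (B' B : EMMonoid M) (q : Hom (emcar M B') (emcar M B))
  (r : Hom (emcar M B) (emcar M B')) :
  is_EMhom M B' B q -> q ∘ r = idm _ -> emact M B = q ∘ emact M B' ∘ Mm M r.
Proof.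
  intros [q_act _] q_r.
  rewrite q_act, comp_assoc_r, <- (Mm_comp _ HM), q_r, (Mm_id _ HM), comp_idr; reflexivity.
Qed.

Lemma emmul_split (B' B : EMMonoid M) (q : Hom (emcar M B') (emcar M B))
  (r : Hom (emcar M B) (emcar M B')) :
  is_EMhom M B' B q -> q ∘ r = idm _ -> emmul M B = q ∘ emmul M B' ∘ tensm m r r.
Proof.
  intros [_ [q_mul _]] q_r.
  rewrite q_mul, comp_assoc_r, <- (tensm_comp _ Hm), q_r, (tensm_id _ Hm), comp_idr;
    reflexivity.
Qed.

Lemma is_EMhom_descend (A' A B' B : EMMonoid M)
  (pA : Hom (emcar M A') (emcar M A)) (sA : Hom (emcar M A) (emcar M A'))
  (pB : Hom (emcar M B') (emcar M B)) (sB : Hom (emcar M B) (emcar M B'))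
  (k : Hom (emcar M A') (emcar M B')) (h : Hom (emcar M A) (emcar M B)) :
  is_EMhom M A' A pA -> is_EMhom M B' B pB -> is_EMhom M A' B' k ->
  pA ∘ sA = idm _ -> pB ∘ sB = idm _ ->
  h ∘ pA = pB ∘ k -> k ∘ sA = sB ∘ h -> is_EMhom M A B h.
Proof.
  intros HpA HpB [k_act [k_mul k_unit]] pA_sA pB_sB h_pA k_sA.
  repeat split.
  - rewrite (emact_split _ _ _ _ HpA pA_sA), (emact_split _ _ _ _ HpB pB_sB); reassoc.
    rewrite (comp_assoc h), h_pA; reassoc.
    rewrite (comp_assoc k), k_act; reassoc.
    rewrite <- !(Mm_comp _ HM), k_sA; reflexivity.
  - rewrite (emmul_split _ _ _ _ HpA pA_sA), (emmul_split _ _ _ _ HpB pB_sB); reassoc.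
    rewrite (comp_assoc h), h_pA; reassoc.
    rewrite (comp_assoc k), k_mul; reassoc.
    rewrite <- !(tensm_comp _ Hm), k_sA; reflexivity.
  - destruct HpA as [_ [_ pA_unit]], HpB as [_ [_ pB_unit]].
    rewrite <- pA_unit, <- pB_unit, comp_assoc, h_pA, comp_assoc_r, k_unit; reflexivity.
Qed.
End StructureTransport.

Section Comparison.
Context {C : Category} {m : MonoidalData C} {M : StrongMonadData m}
        (Hm : IsMonoidal m) (HM : IsStrongMonad M) (F : LeftAdjointToU M).

Lemma counit_unitF (B : EMMonoid M) : proj1_sig (counit F B) ∘ unitF F (emcar M B) = idm _.
Proof. apply ext_comm. Qed.

Section AlgebraToMonoid.
Variables (X : C) (x : Hom (UFob F X) X).
Hypothesis x_unit : x ∘ unitF F X = idm X.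
Hypothesis x_mult : x ∘ UFmap F _ _ x = x ∘ UFmult F X.

Let h1 : EMHom M (Fob F (UFob F X)) (Fob F X) := ext F (unitF F X ∘ x).
Let h2 : EMHom M (Fob F (UFob F X)) (Fob F X) := counit F (Fob F X).

Definition alg_EMMonoid : EMMonoid M :=
  quot_EMMonoid Hm HM (Fob F X) X x (unitF F X) x_unit
    (coequaliser_act HM _ _ h1 h2 (unitF F (UFob F X)) X x (unitF F X) x_mult
       (ext_comm _ F _ _ _) (counit_unitF _))
    (coequaliser_mul Hm _ _ h1 h2 (unitF F (UFob F X)) X x (unitF F X) x_mult
       (ext_comm _ F _ _ _) (counit_unitF _)).

Lemma counit_alg_EMMonoid : proj1_sig (counit F alg_EMMonoid) = x.
Proof.
  change (proj1_sig (ext F (B := alg_EMMonoid) (idm X)) = x).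
  rewrite <- (ext_uniq _ F X alg_EMMonoid (idm X) (exist _ x (quot_EMhom Hm HM _ _ _ _ _ _ _))
    x_unit).
  reflexivity.
Qed.

Lemma comparison_ob_alg_EMMonoid :
  comparison_ob Hm HM F alg_EMMonoid = existT _ X (exist _ x (conj x_unit x_mult)).
Proof.
  unfold comparison_ob; generalize (counit_alg Hm HM F alg_EMMonoid).
  pose proof counit_alg_EMMonoid as E; simpl in E |- *.
  rewrite E; intro alg_laws.
  f_equal; f_equal; apply proof_irrelevance.
Qed.
End AlgebraToMonoid.

Lemma comparison_ob_inj (B1 B2 : EMMonoid M) :
  comparison_ob Hm HM F B1 = comparison_ob Hm HM F B2 -> B1 = B2.
Proof.
  intro H.
  pose proof (emact_split HM _ _ _ _ (proj2_sig (counit F B1)) (counit_unitF B1)) as act1.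
  pose proof (emact_split HM _ _ _ _ (proj2_sig (counit F B2)) (counit_unitF B2)) as act2.
  pose proof (emmul_split Hm _ _ _ _ (proj2_sig (counit F B1)) (counit_unitF B1)) as mul1.
  pose proof (emmul_split Hm _ _ _ _ (proj2_sig (counit F B2)) (counit_unitF B2)) as mul2.
  pose proof (proj2 (proj2 (proj2_sig (counit F B1)))) as unit1.
  pose proof (proj2 (proj2 (proj2_sig (counit F B2)))) as unit2.
  destruct B1 as [X a1 m1 u1 ? ? ? ? ? ?], B2 as [X2 a2 m2 u2 ? ? ? ? ? ?].
  injection H as <- Hcounit.
  apply inj_pair2 in Hcounit; cbn in *.
  rewrite Hcounit in act1, mul1, unit1.
  assert (a1 = a2) as <- by (rewrite act1, act2; reflexivity).
  assert (m1 = m2) as <- by (rewrite mul1, mul2; reflexivity).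
  assert (u1 = u2) as <- by (rewrite <- unit1, <- unit2; reflexivity).
  f_equal; apply proof_irrelevance.
Qed.

Lemma comparison_hom_EMhom (A B : EMMonoid M) (h : Hom (emcar M A) (emcar M B)) :
  h ∘ proj1_sig (counit F A) = proj1_sig (counit F B) ∘ UFmap F _ _ h -> is_EMhom M A B h.
Proof.
  intro Hh.
  apply (is_EMhom_descend Hm HM _ _ _ _ (proj1_sig (counit F A)) (unitF F _)
           (proj1_sig (counit F B)) (unitF F _) (UFmap F _ _ h)).
  - exact (proj2_sig (counit F A)).
  - exact (proj2_sig (counit F B)).
  - exact (proj2_sig (ext F (unitF F (emcar M B) ∘ h))).
  - apply counit_unitF.
  - apply counit_unitF.
  - exact Hh.
  - apply ext_comm.
Qed.

Lemma comparison_iso : IsoOfCategories (comparison Hm HM F).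
Proof.
  split; [split | intros A B; split].
  - exact comparison_ob_inj.
  - intros [X [x [x_unit x_mult]]].
    exists (alg_EMMonoid X x x_unit x_mult); apply comparison_ob_alg_EMMonoid.
  - intros f g Hfg; apply sig_ext; exact (f_equal (@proj1_sig _ _) Hfg).
  - intros [h Hh]; exists (exist _ h (comparison_hom_EMhom A B h Hh)); apply sig_ext; reflexivity.
Qed.
End Comparison.

Theorem theorem13 (C : Category) (m : MonoidalData C) (Hm : IsMonoidal m)
  (M : StrongMonadData m) (HM : IsStrongMonad M)
  (Hfree : forall A : C, AlgFreeMonadStronglyGenerated M A)
  (F : LeftAdjointToU M) :
  StrictlyMonadic Hm HM F /\
  exists K : Functor (EMMon_cat M Hm HM) (UF_EM_cat Hm HM F), IsoOfCategories K.
Proof.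
  (* [Hfree] only serves to construct the left adjoint, which is given as [F]. *)
  split.
  - apply comparison_iso.
  - exists (comparison Hm HM F); apply comparison_iso.
Qed.
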